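(* Let $S,T$ be totally ordered sets and $M\colon S\times T\to\mathbf{Vec}$ pointwise finite-dimensional and middle exact. Let $s\in S$, $t\in T$, and let $J_S\subseteq S$, $J_T\subseteq T$ be intervals. (1) Suppose some element of $T\setminus J_T$ is an upper bound of $J_T$. Then every monomorphism $h\colon k_{\{s\}\times J_T}\hookrightarrow M|_{\{s\}\times T}$ (of modules over $\{s\}\times T$) extends to a monomorphism $k_{(-\infty,s]\times J_T}\hookrightarrow M|_{(-\infty,s]\times T}$ (of modules over $(-\infty,s]\times T$) whose restriction to $\{s\}\times T$ is $h$. (2) Suppose some element of $S\setminus J_S$ is an upper bound of $J_S$. Then every monomorphism $h\colon k_{J_S\times\{t\}}\hookrightarrow M|_{S\times\{t\}}$ extends to a monomorphism $k_{J_S\times(-\infty,t]}\hookrightarrow M|_{S\times(-\infty,t]}$ whose restriction to $S\times\{t\}$ is $h$.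
   Context: $S\times T$ has the product order. $(-\infty,s]=\{r\in S:r\le s\}$, similarly in $T$. $M$ is middle exact if for all $x\le x'$ in $S$, $y\le y'$ in $T$, with $a=(x,y)$, $b=(x,y')$, $c=(x',y)$, $d=(x',y')$, the sequence $M_a\xrightarrow{(M(a\le b),M(a\le c))}M_b\oplus M_c\xrightarrow{M(b\le d)-M(c\le d)}M_d$ is exact at the middle. Intervals in a totally ordered set are non-empty convex subsets. For a subset $B$ of a poset $Q$, $k_B$ is the module over $Q$ equal to $k$ on $B$, $0$ elsewhere, with identity maps between points of $B$ and zero maps otherwise; $M|_Q$ is the restriction of $M$ to $Q$. *)

From HB Require Import structures.
From mathcomp Require Import all_boot all_order all_algebra.
Set Implicit Arguments. Unset Strict Implicit. Unset Printing Implicit Defensive.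
Import Order.TTheory GRing.Theory.
Local Open Scope ring_scope.
Local Open Scope order_scope.

(* Persistence modules over a poset P with values in finite-dimensional
   k-vector spaces (vectType k), given by a family of spaces V p and a family of
   linear maps f p q : V p -> V q (only meaningful when p <= q). *)

Definition is_pmod_on (k : fieldType) d (P : porderType d) (A : pred P)
  (V : P -> vectType k) (f : forall p q : P, 'Hom(V p, V q)) : Prop :=
  (forall p (v : V p), p \in A -> f p p v = v) /\
  (forall p q r (v : V p), p \in A -> q \in A -> r \in A ->
     p <= q -> q <= r -> f p r v = f q r (f p q v)).

Definition middle_exact (k : fieldType) dS dT (S : orderType dS) (T : orderType dT)
  (M : S *p T -> vectType k) (f : forall p q : S *p T, 'Hom(M p, M q)) : Prop :=
  forall (x x' : S) (y y' : T), x <= x' -> y <= y' ->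
    (* composite M_a -> M_b (+) M_c -> M_d is zero (image in kernel) *)
    (forall va : M (x, y),
        (f (x, y') (x', y') (f (x, y) (x, y') va)
         - f (x', y) (x', y') (f (x, y) (x', y) va) = 0)%R) /\
    (* kernel in image *)
    (forall (vb : M (x, y')) (vc : M (x', y)),
        (f (x, y') (x', y') vb - f (x', y) (x', y') vc = 0)%R ->
        exists va : M (x, y),
          f (x, y) (x, y') va = vb /\ f (x, y) (x', y) va = vc).

Definition is_interval d (T : orderType d) (J : pred T) : Prop :=
  (exists t, t \in J) /\
  (forall a b c : T, a \in J -> c \in J -> a <= b -> b <= c -> b \in J).

(* Interval module k_B over P: k (= 'rV_1) on B, 0 (= 'rV_0) elsewhere;
   identity maps between points of B, zero maps otherwise. *)
Definition ivV (k : fieldType) d (P : porderType d) (B : pred P) (p : P) : vectType k :=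
  'rV[k]_(p \in B).

Definition ivf (k : fieldType) d (P : porderType d) (B : pred P) (p q : P)
  : 'Hom(ivV k B p, ivV k B q) :=
  linfun (fun v : 'rV[k]_(p \in B) =>
            v *m (pid_mx ((p \in B) && (q \in B)) : 'M[k]_(p \in B, q \in B))).

Definition nat_on (k : fieldType) d (P : porderType d) (A : pred P)
  (V W : P -> vectType k) (fV : forall p q, 'Hom(V p, V q))
  (fW : forall p q, 'Hom(W p, W q)) (h : forall p, 'Hom(V p, W p)) : Prop :=
  forall p q (v : V p), p \in A -> q \in A -> p <= q ->
    fW p q (h p v) = h q (fV p q v).

Definition mono_on (k : fieldType) d (P : porderType d) (A : pred P)
  (V W : P -> vectType k) (h : forall p, 'Hom(V p, W p)) : Prop :=
  forall p, p \in A -> lker (h p) == 0%VS.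

Arguments is_pmod_on {k d P} A V f.
Arguments middle_exact {k dS dT S T} M f.
Arguments nat_on {k d P} A V W fV fW h.
Arguments mono_on {k d P} A V W h.

From HB Require Import structures.
From mathcomp Require Import all_boot all_order all_algebra.
From mathcomp Require Import boolp.
From mathcomp Require classical_sets.
Set Implicit Arguments. Unset Strict Implicit. Unset Printing Implicit Defensive.
Import Order.TTheory GRing.Theory.
Local Open Scope ring_scope.
Local Open Scope order_scope.

(* A monomorphism h : k_({s} x J) -> M on the line {s} x T amounts to the
   nonzero vectors m y = h (s, y) 1 (y in J), transported by M exactly as the generator
   of k_J is (an "interval section").  An extension to (-oo, s] x J must take at (x, y)
   an admissible value: one mapped to m y at (s, y) and killed at every (x, y') with
   y <= y' outside J.  Admissible values form an affine subspace, non-empty by middle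
   exactness at a point y' outside J of least kernel (one exists since J has an upper
   bound outside J), and M maps these subspaces into each other.  The general fact
   compatible_section -- a compatible family of affine subspaces of a pointwise
   finite-dimensional module over a sublattice has a compatible section, proved with
   Zorn's lemma and a dimension argument -- then gives the extension.
   Part (2) is part (1) for the transposed module over T x S: middle exactness is
   symmetric.  Finally interval sections are turned back into monomorphisms.
   The file develops, in order: affine subspaces, compatible_section, interval
   sections, the extension along a line (extend_along_line), transposition, the
   correspondence between interval sections and monomorphisms, and the theorem. *)

Section Affine.
Variable k : fieldType.

(* An affine subspace of V, presented by a base point and a direction. *)
Definition affine (V : vectType k) := (V * {vspace V})%type.

Definition on_aff (V : vectType k) (a : affine V) (v : V) : bool := v - a.1 \in a.2.

Definition aff_le (V : vectType k) (a b : affine V) : bool :=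
  (a.2 <= b.2)%VS && (a.1 - b.1 \in b.2).

Definition aff_img (V W : vectType k) (F : 'Hom(V, W)) (a : affine V) : affine W :=
  (F a.1, (F @: a.2)%VS).

Variables V W : vectType k.

Lemma on_aff_base (a : affine V) : on_aff a a.1.
Proof. by rewrite /on_aff subrr rpred0. Qed.

Lemma on_aff_shift (a : affine V) u : u \in a.2 -> on_aff a (a.1 + u).
Proof. by rewrite /on_aff addrC addKr. Qed.

Lemma on_aff_sub (a : affine V) x y : on_aff a x -> on_aff a y -> x - y \in a.2.
Proof.
by move=> hx hy; rewrite -(subrK a.1 x) -(subrK a.1 y) opprD addrACA subrr addr0 rpredB.
Qed.

Lemma aff_le_on (a b : affine V) v : aff_le a b -> on_aff a v -> on_aff b v.
Proof.
case/andP=> /subvP sab dab; rewrite /on_aff => va.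
by rewrite -(subrK a.1 v) -addrA rpredD // sab.
Qed.

Lemma aff_le_refl (a : affine V) : aff_le a a.
Proof. by rewrite /aff_le subvv subrr rpred0. Qed.

Lemma aff_le_trans (a b c : affine V) : aff_le a b -> aff_le b c -> aff_le a c.
Proof.
move=> /andP[sab dab] /andP[sbc dbc]; rewrite /aff_le (subv_trans sab sbc) /=.
by rewrite -(subrK b.1 a.1) -addrA rpredD // (subvP sbc).
Qed.

Lemma aff_le_dim (a b : affine V) : aff_le a b -> (\dim b.2 <= \dim a.2)%N -> aff_le b a.
Proof.
case/andP=> sab dab dle; have /eqP E : a.2 == b.2 by rewrite eqEdim sab.
by rewrite /aff_le E subvv /= -opprB rpredN.
Qed.

Lemma on_aff_imgP (F : 'Hom(V, W)) (a : affine V) w :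
  on_aff (aff_img F a) w -> exists2 v, on_aff a v & F v = w.
Proof.
case/memv_imgP=> u ua Eu; exists (a.1 + u); first exact: on_aff_shift.
by rewrite linearD /= -Eu addrC subrK.
Qed.

End Affine.

Lemma aff_img_le (k : fieldType) (U V W : vectType k)
    (F : 'Hom(U, W)) (F' : 'Hom(V, W)) (G : 'Hom(U, V)) (a : affine U) (b : affine V) :
  (forall v, F v = F' (G v)) -> (forall v, on_aff a v -> on_aff b (G v)) ->
  aff_le (aff_img F a) (aff_img F' b).
Proof.
move=> FE aGb; have Ga := aGb _ (on_aff_base a).
apply/andP; split; last by rewrite /= FE -linearB memv_img.
apply/subvP=> _ /memv_imgP[u ua ->]; rewrite FE memv_img //.
have := on_aff_sub (aGb _ (on_aff_shift ua)) Ga.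
by rewrite linearD /= addrAC subrr add0r.
Qed.

Lemma ex_argmin_nat (I : Type) (F : I -> Prop) (d : I -> nat) :
  (exists i, F i) -> exists2 i, F i & forall j, F j -> (d i <= d j)%N.
Proof.
move=> [i0 Fi0].
have exn : exists n, `[< exists i, F i /\ d i = n >].
  by exists (d i0); apply/asboolP; exists i0.
case: (ex_minnP exn) => _ /asboolP[i [Fi <-]] dmin; exists i => // j Fj.
by apply: dmin; apply/asboolP; exists j.
Qed.

Section CompatibleSections.
Variables (k : fieldType) (d : Order.disp_t) (L : latticeType d) (R : pred L).
Hypothesis RI : forall p q, p \in R -> q \in R -> p `&` q \in R.
Hypothesis RU : forall p q, p \in R -> q \in R -> p `|` q \in R.
Variables (M : L -> vectType k) (f : forall p q : L, 'Hom(M p, M q)).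
Hypothesis HM : is_pmod_on R M f.

Let fid p v : p \in R -> f p p v = v.
Proof. by case: HM => + _; apply. Qed.

Let fcomp p q r v : p \in R -> q \in R -> r \in R -> p <= q -> q <= r ->
  f p r v = f q r (f p q v).
Proof. by case: HM => _; apply. Qed.

Definition aff_family := forall p, affine (M p).

Definition compatible (B : aff_family) : Prop :=
  forall p q v, p \in R -> q \in R -> p <= q -> on_aff (B p) v -> on_aff (B q) (f p q v).

Definition below (B B' : aff_family) : Prop := forall p, p \in R -> aff_le (B p) (B' p).

Lemma below_refl B : below B B.
Proof. by move=> p _; exact: aff_le_refl. Qed.

Lemma below_trans B1 B2 B3 : below B1 B2 -> below B2 B3 -> below B1 B3.
Proof. by move=> h12 h23 p Rp; exact: aff_le_trans (h12 p Rp) (h23 p Rp). Qed.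

(* A chain of compatible families has a compatible lower bound: at each point
   take the member of the chain of least dimension there. *)
Lemma chain_lower_bound (F : aff_family -> Prop) :
  (forall B, F B -> compatible B) -> (exists B, F B) ->
  (forall B B', F B -> F B' -> below B B' \/ below B' B) ->
  exists2 U, compatible U & forall B, F B -> below U B.
Proof.
move=> Fcomp Fne Ftot.
have Fmin p : exists Bp, F Bp /\ forall B, F B -> (\dim (Bp p).2 <= \dim (B p).2)%N.
  by have [Bp ? ?] := ex_argmin_nat (fun B => \dim (B p).2) Fne; exists Bp.
pose Bmin p := projT1 (cid (Fmin p)).
have FBmin p : F (Bmin p) by case: (projT2 (cid (Fmin p))).
have Bmin_dim p B : F B -> (\dim (Bmin p p).2 <= \dim (B p).2)%N.
  by case: (projT2 (cid (Fmin p))) => _; apply.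
have Bmin_le p B : p \in R -> F B -> aff_le (Bmin p p) (B p).
  move=> Rp FB; case: (Ftot _ _ (FBmin p) FB) => [/(_ p Rp) //|/(_ p Rp) le].
  exact: aff_le_dim le (Bmin_dim p _ FB).
exists (fun p => Bmin p p) => [p q v Rp Rq lepq Bv|B FB p Rp]; last exact: Bmin_le.
by apply: (Fcomp _ (FBmin q)) => //; exact: aff_le_on (Bmin_le p _ Rp (FBmin q)) Bv.
Qed.

Variable base : aff_family.
Hypothesis base_compat : compatible base.

Lemma minimal_family : exists Bm, [/\ compatible Bm, below Bm base &
  forall B, compatible B -> below B Bm -> below Bm B].
Proof.
pose T := {B : aff_family | compatible B /\ below B base}.
pose t0 : T := exist _ base (conj base_compat (@below_refl base)).
pose Rel (a b : T) := `[< below (sval b) (sval a) >].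
have Rrefl a : Rel a a by apply/asboolP; exact: below_refl.
have Rtrans a b c : Rel a b -> Rel b c -> Rel a c.
  by move=> /asboolP ab /asboolP bc; apply/asboolP; exact: below_trans bc ab.
have chain A : classical_sets.total_on A Rel -> exists t, forall s, A s -> Rel s t.
  move=> Atot; pose F B := B = base \/ exists2 a : T, A a & sval a = B.
  have Fcomp B : F B -> compatible B by case=> [->|[a _ <-]] //; case: (svalP a).
  have Ftot B B' : F B -> F B' -> below B B' \/ below B' B.
    case=> [->|[a Aa <-]] [->|[b Ab <-]]; [by left; apply: below_refl
      | by right; case: (svalP b)| by left; case: (svalP a)|].
    by case: (Atot a b Aa Ab) => /asboolP ?; [right|left].
  have [U Ucomp Umin] := chain_lower_bound Fcomp (ex_intro _ base (or_introl erefl)) Ftot.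
  exists (exist _ U (conj Ucomp (Umin _ (or_introl erefl)))) => a Aa.
  by apply/asboolP; apply: Umin; right; exists a.
have [[Bm [Bcomp Bbase]] Bmax] := classical_sets.ZL_preorder t0 Rrefl Rtrans chain.
exists Bm; split=> // B Bc BBm.
have BT : compatible B /\ below B base by split=> //; exact: below_trans BBm Bbase.
by have /asboolP := Bmax (exist _ B BT) (introT (asboolP _) BBm).
Qed.

Section ShrinkAtPoint.
Variables (B : aff_family) (p0 : L).
Hypotheses (Bcomp : compatible B) (Rp0 : p0 \in R).

Let img r := aff_img (f r p0) (B r).

Lemma img_mono r' r : r' \in R -> r \in R -> r' <= r -> r <= p0 ->
  aff_le (img r') (img r).
Proof.
move=> Rr' Rr le'r lerp; apply: aff_img_le (fun v => fcomp v Rr' Rr Rp0 le'r lerp) _.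
by move=> v; exact: Bcomp.
Qed.

(* The images of the B r (r <= p0) are decreasing as r decreases; a smallest one
   exists by finite dimensionality, and it lies in all others since R has meets. *)
Lemma stable_image : exists2 rs, rs \in R /\ rs <= p0 &
  forall r, r \in R -> r <= p0 -> aff_le (img rs) (img r).
Proof.
have [rs [Rrs lers] rsmin] := ex_argmin_nat (fun r => \dim (img r).2)
  (ex_intro (fun r => r \in R /\ r <= p0) p0 (conj Rp0 (lexx p0))).
exists rs => // r Rr lerp; have Rm := RI Rr Rrs.
have lem0 : r `&` rs <= p0 := le_trans (leIl _ _) lerp.
have := aff_le_dim (img_mono Rm Rrs (leIr _ _) lers) (rsmin _ (conj Rm lem0)).
by move/aff_le_trans; apply; exact: img_mono Rm Rr (leIl _ _) lerp.
Qed.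

Lemma lift_to_join rs c : rs \in R -> rs <= p0 ->
  (forall r, r \in R -> r <= p0 -> aff_le (img rs) (img r)) -> on_aff (img rs) c ->
  forall p, p \in R -> exists2 w, on_aff (B p) w & f p (p `|` p0) w = f p0 (p `|` p0) c.
Proof.
move=> Rrs lers stable c_in p Rp; have Rm := RI Rp Rrs; have Rj := RU Rp Rp0.
have lem0 : p `&` rs <= p0 := le_trans (leIr _ _) lers.
have [z zB fz] := on_aff_imgP (aff_le_on (stable _ Rm lem0) c_in).
exists (f (p `&` rs) p z); first exact: Bcomp Rm Rp (leIl _ _) zB.
rewrite -(fcomp z Rm Rp Rj (leIl _ _) (leUl _ _)) -fz.
by rewrite -(fcomp z Rm Rp0 Rj lem0 (leUr _ _)).
Qed.

Lemma cut_family (c : M p0) (w : forall p, M p) :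
  (forall p, p \in R -> on_aff (B p) (w p) /\ f p (p `|` p0) (w p) = f p0 (p `|` p0) c) ->
  let B' := fun p => (w p, ((B p).2 :&: lker (f p (p `|` p0)))%VS) in
  [/\ compatible B', below B' B & forall x, on_aff (B' p0) x -> x = c].
Proof.
move=> wP B'.
have onB' p v : p \in R -> on_aff (B' p) v =
    on_aff (B p) v && (f p (p `|` p0) v == f p (p `|` p0) (w p)).
  move=> Rp; have [wB _] := wP p Rp.
  rewrite /on_aff /= memv_cap memv_ker linearB subr_eq0 -(rpredBr (v - (B p).1) wB).
  by rewrite opprB addrA subrK.
have B'B : below B' B by move=> p Rp; apply/andP; split; [exact: capvSl|case: (wP p Rp)].
split=> // [p q v Rp Rq lepq|x]; last first.
  rewrite onB' // => /andP[_ /eqP]; case: (wP p0 Rp0) => _ ->.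
  by rewrite joinxx !fid.
rewrite !onB' // => /andP[vB /eqP Ev]; rewrite (Bcomp Rp Rq lepq vB) /=.
have [_ wq] := wP q Rq; have [_ wp] := wP p Rp.
have Rpj := RU Rp Rp0; have Rqj := RU Rq Rp0.
have lejj : p `|` p0 <= q `|` p0 by rewrite leUx (leUr _ _) (le_trans lepq (leUl _ _)).
rewrite wq -(fcomp v Rp Rq Rqj lepq (leUl _ _)) (fcomp v Rp Rpj Rqj (leUl _ _) lejj) Ev wp.
by rewrite -(fcomp c Rp0 Rpj Rqj (leUr _ _) lejj).
Qed.

Lemma shrink_to_point : exists2 B', compatible B' /\ below B' B &
  exists c, forall x, on_aff (B' p0) x -> x = c.
Proof.
have [rs [Rrs lers] stable] := stable_image.
pose c := (img rs).1.
have lift := lift_to_join Rrs lers stable (on_aff_base (img rs)).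
have wex p : exists w, p \in R ->
    on_aff (B p) w /\ f p (p `|` p0) w = f p0 (p `|` p0) c.
  have [Rp|nRp] := boolP (p \in R); last by exists 0.
  by have [w ? ?] := lift p Rp; exists w.
have [B'c B'B B'pt] := cut_family (fun p Rp => projT2 (cid (wex p)) Rp).
by eexists; [split; [exact: B'c|exact: B'B]|exists c].
Qed.

End ShrinkAtPoint.

Lemma minimal_family_points Bm : compatible Bm ->
  (forall B, compatible B -> below B Bm -> below Bm B) ->
  forall p, p \in R -> forall x y, on_aff (Bm p) x -> on_aff (Bm p) y -> x = y.
Proof.
move=> Bc Bmin p Rp x y; have [B' [B'c B'Bm] [c B'pt]] := shrink_to_point Bc Rp.
have Bm_le := Bmin _ B'c B'Bm p Rp.
by move=> /(aff_le_on Bm_le)/B'pt-> /(aff_le_on Bm_le)/B'pt->.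
Qed.

Theorem compatible_section : exists g : forall p, M p,
  (forall p, p \in R -> on_aff (base p) (g p)) /\
  (forall p q, p \in R -> q \in R -> p <= q -> f p q (g p) = g q).
Proof.
have [Bm [Bc Bbase Bmin]] := minimal_family.
exists (fun p => (Bm p).1); split=> [p Rp|p q Rp Rq lepq].
  by apply: aff_le_on (Bbase p Rp) _; exact: on_aff_base.
apply: (minimal_family_points Bc Bmin Rq); last exact: on_aff_base.
by apply: Bc => //; exact: on_aff_base.
Qed.

End CompatibleSections.

(* g is a nowhere-vanishing section of the shape of k_B over A: nonzero on B, and
   transported by f exactly as the generator of k_B is. *)
Definition interval_section (k : fieldType) d (P : porderType d) (A B : pred P)
    (M : P -> vectType k) (f : forall p q, 'Hom(M p, M q)) (g : forall p, M p) : Prop :=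
  (forall p, p \in A -> p \in B -> g p != 0) /\
  (forall p q, p \in A -> q \in A -> p <= q -> p \in B ->
     f p q (g p) = if q \in B then g q else 0).

Arguments interval_section {k d P} A B M f g.

Lemma interval_section_comp (k : fieldType) d d' (P : porderType d) (Q : porderType d')
    (M : P -> vectType k) (f : forall p q, 'Hom(M p, M q)) (phi : Q -> P)
    (A B : pred P) (A' B' : pred Q) (g : forall p, M p) :
  {homo phi : x y / x <= y} ->
  (forall y, (phi y \in A) = (y \in A')) -> (forall y, (phi y \in B) = (y \in B')) ->
  interval_section A B M f g ->
  interval_section A' B' (fun y => M (phi y)) (fun y y' => f (phi y) (phi y'))
    (fun y => g (phi y)).
Proof.
move=> phi_mono AA' BB' [gnz gtr].
split=> [y|y y']; rewrite -!AA' -!BB'; first exact: gnz.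
by move=> Ay Ay' le; apply: gtr => //; exact: phi_mono.
Qed.

Section LineExtension.
Variables (k : fieldType) (dS dT : Order.disp_t) (S : orderType dS) (T : orderType dT).
Variables (M : S *p T -> vectType k) (f : forall p q : S *p T, 'Hom(M p, M q)).
Hypotheses (HM : is_pmod_on predT M f) (Hme : middle_exact M f).
Variables (s : S) (J : pred T) (u : T).
Hypotheses (uJ : u \notin J) (uub : forall y, y \in J -> y <= u).
Variable m : forall y, M (s, y).
Hypothesis m_section : interval_section predT J
  (fun y => M (s, y)) (fun y y' => f (s, y) (s, y')) m.

Let fid p v : f p p v = v.
Proof. by case: HM => + _; apply. Qed.

Let fcomp p q r v : p <= q -> q <= r -> f p r v = f q r (f p q v).
Proof. by case: HM => _ fc lpq lqr; apply: fc. Qed.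

Let le_pair (x x' : S) (y y' : T) : x <= x' -> y <= y' -> ((x, y) : S *p T) <= (x', y').
Proof. by move=> lx ly; rewrite leEprod /= lx ly. Qed.

Definition region := [pred p : S *p T | (p.1 <= s) && (p.2 \in J)].

Lemma region_meet p q : p \in region -> q \in region -> p `&` q \in region.
Proof.
rewrite !inE meetEprod /= => /andP[ps pJ] /andP[qs qJ].
rewrite (le_trans (leIl _ _) ps) /=.
by case/orP: (le_total p.2 q.2) => [/meet_idPl|/meet_idPr] ->.
Qed.

Lemma region_join p q : p \in region -> q \in region -> p `|` q \in region.
Proof.
rewrite !inE joinEprod /= leUx => /andP[-> pJ] /andP[-> qJ].
by case/orP: (le_total p.2 q.2) => [/join_idPr|/join_idPl] ->.
Qed.

(* The values at p = (x, y) an extension is forced to take: v maps to m y at (s, y)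
   and dies at every (x, y') with y <= y' outside J. *)
Definition admissible (p : S *p T) (v : M p) : Prop :=
  f p (s, p.2) v = m p.2 /\
  forall y', p.2 <= y' -> y' \notin J -> f p (p.1, y') v = 0.

Lemma m_nonzero y : y \in J -> m y != 0.
Proof. by case: m_section => + _; apply. Qed.

Lemma m_transport y y' : y \in J -> y <= y' ->
  f (s, y) (s, y') (m y) = if y' \in J then m y' else 0.
Proof. by move=> yJ le; case: m_section => _ tr; apply: tr. Qed.

(* Among the y' >= y outside J, the kernel of f (x, y) (x, y') is smallest for some ys:
   the order is total, and kernels grow along the line. *)
Lemma least_kernel x y : y \in J -> exists2 ys, y <= ys /\ ys \notin J &
  forall y', y <= y' -> y' \notin J ->
    (lker (f (x, y) (x, ys)) <= lker (f (x, y) (x, y')))%VS.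
Proof.
move=> yJ; have [ys [leys ysJ] ysmin] := ex_argmin_nat
  (fun y' => \dim (lker (f (x, y) (x, y'))))
  (ex_intro (fun y' => y <= y' /\ y' \notin J) u (conj (uub yJ) uJ)).
have kerS y1 y2 : y <= y1 -> y1 <= y2 ->
    (lker (f (x, y) (x, y1)) <= lker (f (x, y) (x, y2)))%VS.
  move=> le1 le2; apply/subvP => v; rewrite !memv_ker => /eqP E.
  by rewrite (fcomp v (le_pair (lexx x) le1) (le_pair (lexx x) le2)) E linear0.
exists ys => // y' ley' y'J; case/orP: (le_total ys y') => [|le']; first exact: kerS.
have /eqP <- // : lker (f (x, y) (x, y')) == lker (f (x, y) (x, ys)).
by rewrite eqEdim kerS //= ysmin.
Qed.

(* The admissible values at a point of the region form a (non-empty) affine subspace;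
   non-emptiness is where middle exactness is used. *)
Lemma admissible_affine p : p \in region ->
  exists a : affine (M p), forall v, on_aff a v <-> admissible v.
Proof.
case: p => x y; rewrite inE /= => /andP[xs yJ].
have [ys [leys ysJ] kerys] := least_kernel x yJ.
have [va [va_ys va_s]] : exists va, f (x, y) (x, ys) va = 0 /\ f (x, y) (s, y) va = m y.
  apply: (proj2 (Hme xs leys)).
  by rewrite linear0 m_transport // (negbTE ysJ) subrr.
exists (va, (lker (f (x, y) (s, y)) :&: lker (f (x, y) (x, ys)))%VS) => v.
rewrite /on_aff /admissible /= memv_cap !memv_ker !linearB /= va_ys va_s subr0 subr_eq0.
split=> [/andP[/eqP-> /eqP vys]|[-> vJ]]; last by rewrite eqxx vJ ?eqxx.
split=> // y' ley' y'J; apply/eqP; rewrite -memv_ker.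
by apply: (subvP (kerys y' ley' y'J)); rewrite memv_ker vys.
Qed.

Lemma admissible_transport p q (v : M p) : p \in region -> q \in region -> p <= q ->
  admissible v -> admissible (f p q v).
Proof.
case: p v => x y v; case: q => x' y'; rewrite !inE /= => /andP[xs yJ] /andP[x's y'J].
rewrite leEprod /= => /andP[lx ly] [vs vJ]; split=> /= [|y'' ley'' y''J].
  rewrite -(fcomp v (le_pair lx ly) (le_pair x's (lexx y'))).
  by rewrite (fcomp v (le_pair xs (lexx y)) (le_pair (lexx s) ly)) vs m_transport // y'J.
have leyy'' := le_trans ly ley''.
rewrite -(fcomp v (le_pair lx ly) (le_pair (lexx x') ley'')).
by rewrite (fcomp v (le_pair (lexx x) leyy'') (le_pair lx (lexx y''))) vJ ?linear0.
Qed.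

Lemma admissible_neq0 p (v : M p) : p.2 \in J -> admissible v -> v != 0.
Proof.
by move=> pJ [vs _]; apply/eqP => v0; move: (m_nonzero pJ); rewrite -vs v0 linear0 eqxx.
Qed.

Lemma admissible_dies p q (v : M p) : p <= q -> q.2 \notin J -> admissible v -> f p q v = 0.
Proof.
case: p v => x y v; case: q => x' y'; rewrite leEprod /= => /andP[lx ly] y'J [_ vJ].
by rewrite (fcomp v (le_pair (lexx x) ly) (le_pair lx (lexx y'))) vJ ?linear0.
Qed.

Theorem extend_along_line : exists g : forall p, M p,
  interval_section [pred p : S *p T | p.1 <= s] region M f g /\
  forall y, y \in J -> g (s, y) = m y.
Proof.
have ex_adm p : exists a : affine (M p), p \in region ->
    forall v, on_aff a v <-> admissible v.
  by have [/admissible_affine[a ?]|_] := boolP (p \in region); [exists a|exists (0, 0%VS)].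
pose base p := projT1 (cid (ex_adm p)).
have baseP p : p \in region -> forall v, on_aff (base p) v <-> admissible v.
  exact: projT2 (cid (ex_adm p)).
have base_compat : compatible region f base.
  move=> p q v Rp Rq lepq /(baseP p Rp) adm; apply/(baseP q Rq).
  exact: admissible_transport.
have HMR : is_pmod_on region M f by split=> *; [exact: fid|exact: fcomp].
have [g [gbase gcomp]] := compatible_section region_meet region_join HMR base_compat.
have gadm p : p \in region -> admissible (g p).
  by move=> Rp; apply/(baseP p Rp); exact: gbase.
exists g; split; [split|] => [p _ Rp|p q _ qs lepq Rp|y yJ].
- by apply: admissible_neq0 (gadm p Rp); case/andP: Rp.
- case: ifP => Rq; first exact: gcomp.
  rewrite inE in qs; rewrite inE qs /= in Rq.
  by apply: admissible_dies lepq _ (gadm p Rp); rewrite Rq.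
- have Rsy : (s, y) \in region by rewrite inE /= lexx.
  by have [] := gadm _ Rsy; rewrite fid.
Qed.

End LineExtension.

Section Transpose.
Variables (k : fieldType) (dS dT : Order.disp_t) (S : orderType dS) (T : orderType dT).
Variables (M : S *p T -> vectType k) (f : forall p q : S *p T, 'Hom(M p, M q)).

Definition tr_mod (q : T *p S) : vectType k := M (q.2, q.1).

Definition tr_map (p q : T *p S) : 'Hom(tr_mod p, tr_mod q) := f (p.2, p.1) (q.2, q.1).

Lemma le_swap (p q : T *p S) : (p <= q) = (((p.2, p.1) : S *p T) <= (q.2, q.1)).
Proof. by rewrite !leEprod andbC. Qed.

Lemma pmod_transpose : is_pmod_on predT M f -> is_pmod_on predT tr_mod tr_map.
Proof.
case=> fid fcomp; split=> [p v _|p q r v _ _ _]; first exact: fid.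
by rewrite !le_swap; exact: fcomp.
Qed.

Lemma middle_exact_transpose : middle_exact M f -> middle_exact tr_mod tr_map.
Proof.
move=> Hme y y' x x' ly lx; have [comp0 kerim] := Hme x x' y y' lx ly.
split=> [va|vb vc E]; first by rewrite -opprB comp0 oppr0.
by have [|va [? ?]] := kerim vc vb; [rewrite -opprB E oppr0|exists va].
Qed.

Definition untranspose (g : forall q : T *p S, tr_mod q) : forall p : S *p T, M p :=
  fun p => match p as p return M p with (x, y) => g (y, x) end.

Lemma interval_section_transpose (A B : pred (S *p T)) (A' B' : pred (T *p S)) g :
  (forall x y, ((x, y) \in A) = ((y, x) \in A')) ->
  (forall x y, ((x, y) \in B) = ((y, x) \in B')) ->
  interval_section A' B' tr_mod tr_map g -> interval_section A B M f (untranspose g).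
Proof.
move=> AA' BB' [gnz gtr].
split=> [[x y]|[x y] [x' y']]; rewrite ?AA' ?BB'; first exact: gnz.
by move=> Ap Aq lepq; apply: (gtr (y, x) (y', x') Ap Aq); rewrite le_swap.
Qed.

End Transpose.

(* For x in V, the linear map 'rV_b -> V, v |-> (sum_i v_i) x; on the space
   k_B p = 'rV_(p \in B) it sends the generator const_mx 1 to x. *)
Definition ray (k : fieldType) (V : vectType k) (b : nat) (x : V) (v : 'rV[k]_b) : V :=
  \sum_(i < b) v 0 i *: x.

Fact ray_is_linear (k : fieldType) (V : vectType k) (b : nat) (x : V) :
  linear_for *:%R (@ray k V b x).
Proof.
move=> a u v; rewrite /ray scaler_sumr -big_split /=.
by apply: eq_bigr => i _; rewrite !mxE scalerDl scalerA.
Qed.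

HB.instance Definition _ (k : fieldType) (V : vectType k) (b : nat) (x : V) :=
  GRing.isLinear.Build k 'rV[k]_b V *:%R (@ray k V b x) (ray_is_linear x).

Section Ray.
Variables (k : fieldType) (V W : vectType k).

Lemma ray_map (b : nat) (F : 'Hom(V, W)) (x : V) (v : 'rV[k]_b) :
  F (ray x v) = ray (F x) v.
Proof. by rewrite /ray linear_sum; apply: eq_bigr => i _; rewrite linearZ. Qed.

Lemma ray0 (b : nat) (v : 'rV[k]_b) : ray (0 : V) v = 0.
Proof. by rewrite /ray big1 // => i _; rewrite scaler0. Qed.

Lemma ray_delta (b : nat) (x : V) (i : 'I_b) : ray x (delta_mx 0 i) = x.
Proof.
rewrite /ray (bigD1 i) //= big1 ?addr0; first by rewrite mxE !eqxx scale1r.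
by move=> j ji; rewrite mxE eqxx /= (negbTE ji) scale0r.
Qed.

Lemma ray_eq0 (b : bool) (x : V) (v : 'rV[k]_b) : x != 0 -> ray x v = 0 -> v = 0.
Proof.
case: b v => v nx; last by rewrite thinmx0.
rewrite /ray big_ord1 => /eqP; rewrite scaler_eq0 (negbTE nx) orbF => /eqP v0.
by apply/rowP => i; rewrite (ord1 i) v0 mxE.
Qed.

Lemma ray_pid (b1 b2 : bool) (x : V) (v : 'rV[k]_b1) : b1 ->
  ray x (v *m pid_mx (b1 && b2) : 'rV_b2) = if b2 then ray x v else 0.
Proof.
case: b1 v => // v _; case: b2 => /=; last by rewrite thinmx0 linear0.
by rewrite pid_mx_1 mulmx1.
Qed.

End Ray.

Lemma ord_bool (b : bool) (j : 'I_b) : b.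
Proof. by case: b j => // [[]]. Qed.

Lemma delta_const1 (k : fieldType) (b : bool) (j : 'I_b) :
  delta_mx 0 j = const_mx 1 :> 'rV[k]_b.
Proof.
case: b j => [] j; last by case: j.
by apply/matrixP => a c; rewrite !mxE (ord1 a) (ord1 c) (ord1 j).
Qed.

Lemma gen_pid (k : fieldType) (b1 b2 : bool) : b1 ->
  (const_mx 1 : 'rV[k]_b1) *m pid_mx (b1 && b2) = if b2 then const_mx 1 else 0 :> 'rV_b2.
Proof.
case: b1 => // _; case: b2 => /=; last by rewrite thinmx0.
by rewrite pid_mx_1 mulmx1.
Qed.

Section IntervalModules.
Variables (k : fieldType) (d : Order.disp_t) (P : porderType d) (B : pred P).

Lemma ivfE (p q : P) (v : ivV k B p) :
  ivf k B p q v = v *m pid_mx ((p \in B) && (q \in B)).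
Proof. exact: (lfunE (mulmxr _) v). Qed.

Lemma ivf_gen (p q : P) : p \in B ->
  ivf k B p q (const_mx 1) = if q \in B then const_mx 1 else 0.
Proof. by rewrite ivfE; apply: gen_pid. Qed.

Lemma ivV_out (p : P) (v : ivV k B p) : p \notin B -> v = 0.
Proof. by move: v; rewrite /ivV; case: (p \in B) => // v _; exact: thinmx0. Qed.

Lemma gen_neq0 (p : P) : p \in B -> (const_mx 1 : ivV k B p) != 0.
Proof.
rewrite /ivV; case: (p \in B) => // _; apply/eqP => /matrixP /(_ 0 0).
by rewrite !mxE => /eqP; rewrite oner_eq0.
Qed.

Variables (A : pred P) (M : P -> vectType k) (f : forall p q, 'Hom(M p, M q)).

Lemma interval_section_of_mono (h : forall p, 'Hom(ivV k B p, M p)) :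
  nat_on A (ivV k B) M (ivf k B) f h -> mono_on A (ivV k B) M h ->
  interval_section A B M f (fun p => h p (const_mx 1)).
Proof.
move=> hnat hmono; split=> [p Ap Bp|p q Ap Aq lepq Bp].
  by rewrite -(linear0 (h p)) (inj_eq (lker0P (hmono p Ap))) gen_neq0.
by rewrite hnat // ivf_gen // (fun_if (h q)) linear0.
Qed.

Lemma mono_of_interval_section (g : forall p, M p) : interval_section A B M f g ->
  exists G : forall p, 'Hom(ivV k B p, M p),
    [/\ nat_on A (ivV k B) M (ivf k B) f G, mono_on A (ivV k B) M G &
        forall p (i : 'I_(p \in B)), G p (delta_mx 0 i) = g p].
Proof.
move=> [gnz gtr]; exists (fun p => linfun (@ray k (M p) (p \in B) (g p))).
split=> [p q v Ap Aq lepq|p Ap|p i]; rewrite ?lfunE /= ?ray_delta //.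
- have [Bp|nBp] : p \in B \/ p \notin B by case: (p \in B); [left|right].
    by rewrite ray_map (gtr p q) // ivfE ray_pid // (fun_if (fun x : M q => ray x v)) ray0.
  by rewrite (ivV_out v nBp) !linear0.
- apply/lker0P => v w; rewrite !lfunE /= => E; apply/eqP; rewrite -subr_eq0; apply/eqP.
  have [Bp|nBp] : p \in B \/ p \notin B by case: (p \in B); [left|right].
    by apply: (ray_eq0 (gnz p Ap Bp)); rewrite linearB /= E subrr.
  by rewrite (ivV_out v nBp) (ivV_out w nBp) subrr.
Qed.

End IntervalModules.

Theorem lemma5p4 (k : fieldType) dS dT (S : orderType dS) (T : orderType dT)
  (M : S *p T -> vectType k) (f : forall p q : S *p T, 'Hom(M p, M q))
  (HM : is_pmod_on predT M f) (Hme : middle_exact M f)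
  (s : S) (t : T) (JS : pred S) (JT : pred T)
  (HJS : is_interval JS) (HJT : is_interval JT) :
  (* (1) *)
  ((exists u : T, u \notin JT /\ forall y, y \in JT -> y <= u) ->
   let A1 := [pred p : S *p T | p.1 == s] in
   let B1 := [pred p : S *p T | (p.1 == s) && (p.2 \in JT)] in
   let A2 := [pred p : S *p T | p.1 <= s] in
   let B2 := [pred p : S *p T | (p.1 <= s) && (p.2 \in JT)] in
   forall h : forall p, 'Hom(ivV k B1 p, M p),
     nat_on A1 (ivV k B1) M (ivf k B1) f h -> mono_on A1 (ivV k B1) M h ->
     exists g : forall p, 'Hom(ivV k B2 p, M p),
       [/\ nat_on A2 (ivV k B2) M (ivf k B2) f g, mono_on A2 (ivV k B2) M g &
           forall p, p \in A1 ->
             forall (i : 'I_(p \in B2)) (j : 'I_(p \in B1)),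
               g p (delta_mx 0 i) = h p (delta_mx 0 j)]) /\
  (* (2) *)
  ((exists u : S, u \notin JS /\ forall x, x \in JS -> x <= u) ->
   let A1 := [pred p : S *p T | p.2 == t] in
   let B1 := [pred p : S *p T | (p.1 \in JS) && (p.2 == t)] in
   let A2 := [pred p : S *p T | p.2 <= t] in
   let B2 := [pred p : S *p T | (p.1 \in JS) && (p.2 <= t)] in
   forall h : forall p, 'Hom(ivV k B1 p, M p),
     nat_on A1 (ivV k B1) M (ivf k B1) f h -> mono_on A1 (ivV k B1) M h ->
     exists g : forall p, 'Hom(ivV k B2 p, M p),
       [/\ nat_on A2 (ivV k B2) M (ivf k B2) f g, mono_on A2 (ivV k B2) M g &
           forall p, p \in A1 ->
             forall (i : 'I_(p \in B2)) (j : 'I_(p \in B1)),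
               g p (delta_mx 0 i) = h p (delta_mx 0 j)]).
Proof.
split=> -[u [uJ uub]] A1 B1 A2 B2 h hnat hmono; rewrite {}/A1 {}/B1 in h hnat hmono *.
- have line : interval_section predT JT (fun y => M (s, y))
      (fun y y' => f (s, y) (s, y')) (fun y => h (s, y) (const_mx 1)).
    apply: (interval_section_comp (phi := fun y : T => (s, y) : S *p T) _ _ _
      (interval_section_of_mono hnat hmono)) => [y y' le|y|y]; rewrite ?inE /= ?eqxx //.
    by rewrite leEprod /= lexx.
  have [g [gsec gline]] := extend_along_line HM Hme uJ uub line.
  have [G [Gnat Gmono GE]] := mono_of_interval_section gsec.
  exists G; split=> // -[x y]; rewrite inE /= => /eqP xs i j; subst x.
  by rewrite GE gline ?delta_const1 //; move: (ord_bool j); rewrite inE /= eqxx.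
- have line : interval_section predT JS (fun x => M (x, t))
      (fun x x' => f (x, t) (x', t)) (fun x => h (x, t) (const_mx 1)).
    apply: (interval_section_comp (phi := fun x : S => (x, t) : S *p T) _ _ _
      (interval_section_of_mono hnat hmono)) => [x x' le|x|x];
      rewrite ?inE /= ?eqxx ?andbT //.
    by rewrite leEprod /= lexx andbT.
  have [g [gsec gline]] :=
    extend_along_line (pmod_transpose HM) (middle_exact_transpose Hme) uJ uub line.
  have gsec' : interval_section A2 B2 M f (untranspose g).
    by apply: interval_section_transpose gsec => x y; rewrite !inE // andbC.
  have [G [Gnat Gmono GE]] := mono_of_interval_section gsec'.
  exists G; split=> // -[x y]; rewrite inE /= => /eqP yt i j; subst y.
  by rewrite GE /= gline ?delta_const1 //; move: (ord_bool j); rewrite inE /= eqxx andbT.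
Qed.
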